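(* Consider the hybrid system (2.2) where $F$ is defined for all $(h,x)\in[0,r]\times\mathbb{R}^n$. Suppose there exist $\sigma>0$, $\lambda\in(0,1)$ and $a\in K_\infty$ such that $|z(t,z_0)|\le\exp(-\sigma t)a(|z_0|)$ for all $t\ge0$, $z_0\in\mathbb{R}^n$, and $|x(t,x_0;u)|\le\exp(-\lambda\sigma t)a(|x_0|)$ for all $t\ge0$, $x_0\in\mathbb{R}^n$ and all locally bounded $u:\mathbb{R}^+\to\mathbb{R}^+$. Suppose further there is a continuous $L:\mathbb{R}^n\to(0,+\infty)$ such that $|F(h,z)-F(h,x)|\le L(x_0)|z-x|$ for all $x_0\in\mathbb{R}^n$, all $z,x$ with $|x|,|z|\le a(|x_0|)$ and all $h\in[0,\varphi(x)]$. For $x_0$, $u$ given, let $\tau_i,h_i$ be the switching times and step sizes of $x(\cdot,x_0;u)$, let $e(t):=z(t,x_0)-x(t,x_0;u)$, $\tilde d(h,x):=\frac{z(h,x)-x}{h}-F(h,x)$ and $D_i(x_0):=\max_{j=0,\dots,i}|\tilde d(h_j,z(\tau_j,x_0))|$. Then for all $i\ge0$, $$|e(\tau_{i+1})|\le\frac{D_i(x_0)}{L(x_0)}\big(\exp(L(x_0)\tau_{i+1})-1\big)$$ and $$|e(\tau_{i+1})|\le\Big(\frac{D_i(x_0)}{L(x_0)}\Big)^{\frac{\lambda\sigma}{\lambda\sigma+L(x_0)}}\big(2a(|x_0|)\big)^{\frac{L(x_0)}{\lambda\sigma+L(x_0)}}.$$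
   Context: Standing framework: $f$ locally Lipschitz, $f(0)=0$, $z(t,x)$ the solution of $\dot z=f(z)$ with $z(0)=x$. $r>0$, $\varphi:\mathbb{R}^n\to(0,r]$ continuous, $F$ with $F(h,0)=0$, $\lim_{h\to0^+}F(h,x)=f(x)$, and $|F(h,x)|\le|x|M(|x|)$ for a continuous nondecreasing $M$. The hybrid system (2.2): for each locally bounded $u:\mathbb{R}^+\to\mathbb{R}^+$ and $x_0$, $\tau_0=0$, $x(0)=x_0$, $h_i=\varphi(x(\tau_i))\exp(-u(\tau_i))$, $\tau_{i+1}=\tau_i+h_i$, $x(t)=x(\tau_i)+(t-\tau_i)F(h_i,x(\tau_i))$ on $[\tau_i,\tau_{i+1}]$; its solution is $x(t,x_0;u)$. $K_\infty$ is the class of continuous increasing $\rho:\mathbb{R}^+\to\mathbb{R}^+$ with $\rho(0)=0$ and $\rho(s)\to\infty$ as $s\to\infty$. *)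

From mathcomp Require Import ssreflect ssrfun ssrbool eqtype ssrnat fintype bigop.
From Stdlib Require Import Reals.
Open Scope R_scope.

Definition vec (n : nat) := 'I_n -> R.
Definition vadd {n} (x y : vec n) : vec n := fun i => x i + y i.
Definition vsub {n} (x y : vec n) : vec n := fun i => x i - y i.
Definition vscale {n} (c : R) (x : vec n) : vec n := fun i => c * x i.
Definition vzero {n} : vec n := fun _ => 0.
Definition vnorm {n} (x : vec n) : R :=
  sqrt (\big[Rplus/0]_(i < n) (x i * x i)).

Definition cont_on_nonneg (g : R -> R) : Prop :=
  forall s, 0 <= s -> forall eps, 0 < eps -> exists delta, 0 < delta /\
    forall s', 0 <= s' -> Rabs (s' - s) < delta -> Rabs (g s' - g s) < eps.

Definition K_infty (a : R -> R) : Prop :=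
  cont_on_nonneg a /\
  (forall s, 0 <= s -> 0 <= a s) /\
  (forall s t, 0 <= s -> s < t -> a s < a t) /\
  a 0 = 0 /\
  (forall B, exists s, 0 <= s /\ B < a s).

Definition cont_vec_R {n} (g : vec n -> R) : Prop :=
  forall x eps, 0 < eps -> exists delta, 0 < delta /\
    forall y, vnorm (vsub y x) < delta -> Rabs (g y - g x) < eps.

Definition locally_lipschitz {n} (f : vec n -> vec n) : Prop :=
  forall x, exists delta K, 0 < delta /\ 0 <= K /\
    forall y w, vnorm (vsub y x) < delta -> vnorm (vsub w x) < delta ->
      vnorm (vsub (f y) (f w)) <= K * vnorm (vsub y w).

Definition is_flow {n} (f : vec n -> vec n) (z : R -> vec n -> vec n) : Prop :=
  forall x : vec n,
    z 0 x = x /\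
    (forall i : 'I_n, forall eps, 0 < eps -> exists delta, 0 < delta /\
        forall s, 0 <= s < delta -> Rabs (z s x i - x i) < eps) /\
    (forall (i : 'I_n) t, 0 < t ->
        derivable_pt_lim (fun s => z s x i) t (f (z t x) i)).

Definition loc_bounded_nonneg (u : R -> R) : Prop :=
  (forall t, 0 <= t -> 0 <= u t) /\
  (forall T, exists B, forall t, 0 <= t <= T -> u t <= B).

(* The hybrid system (2.2): the pair (tau_i, x(tau_i)) *)
Fixpoint hyb_state {n} (phi : vec n -> R) (F : R -> vec n -> vec n)
    (u : R -> R) (x0 : vec n) (i : nat) : R * vec n :=
  match i with
  | O => (0, x0)
  | S k =>
      let (tk, xk) := hyb_state phi F u x0 k in
      let hk := phi xk * exp (- u tk) in
      (tk + hk, vadd xk (vscale hk (F hk xk)))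
  end.

Definition hyb_tau {n} phi F u (x0 : vec n) i := fst (hyb_state phi F u x0 i).
Definition hyb_x {n} phi F u (x0 : vec n) i := snd (hyb_state phi F u x0 i).
Definition hyb_h {n} phi F u (x0 : vec n) i :=
  phi (hyb_x phi F u x0 i) * exp (- u (hyb_tau phi F u x0 i)).

(* value of x(t, x0; u) for t in [tau_i, tau_{i+1}] *)
Definition hyb_traj {n} phi F u (x0 : vec n) (i : nat) (t : R) : vec n :=
  vadd (hyb_x phi F u x0 i)
       (vscale (t - hyb_tau phi F u x0 i)
               (F (hyb_h phi F u x0 i) (hyb_x phi F u x0 i))).

Definition dtilde {n} (z : R -> vec n -> vec n) (F : R -> vec n -> vec n)
    (h : R) (x : vec n) : vec n :=
  vsub (vscale (/ h) (vsub (z h x) x)) (F h x).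

Fixpoint Dmax {n} (z : R -> vec n -> vec n) phi F u (x0 : vec n) (i : nat) : R :=
  let dj j := vnorm (dtilde z F (hyb_h phi F u x0 j) (z (hyb_tau phi F u x0 j) x0)) in
  match i with
  | O => dj O
  | S k => Rmax (Dmax z phi F u x0 k) (dj (S k))
  end.

(* real power with 0^p = 0 (used only with p > 0 and base >= 0) *)
Definition rpow (x p : R) : R := if Rlt_dec 0 x then Rpower x p else 0.

From HB Require Import structures.
From mathcomp Require Import ssreflect ssrfun ssrbool eqtype ssrnat seq fintype bigop.
From Stdlib Require Import Reals Lra Psatz FunctionalExtensionality Classical.
Open Scope R_scope.

(* Let e_j = |z(tau_j, x0) - x(tau_j)|.  Since z(tau_{j+1}) = z(h_j, z(tau_j))
   (semigroup property of the flow), one step of the scheme gives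
     e_{j+1} <= (1 + h_j L) e_j + h_j |d~(h_j, z(tau_j))|,
   because both trajectories stay in the ball of radius a(|x0|), where F(h, .)
   is L-Lipschitz.  A discrete Gronwall lemma turns this recursion into the
   first bound D_i / L (exp (L tau_{i+1}) - 1).  The two decay hypotheses give
   e_{i+1} <= 2 a(|x0|) exp (- lambda sigma tau_{i+1}); interpolating the two
   bounds in logarithmic scale eliminates tau_{i+1} and gives the second one.

   The hypothesis is_flow only says that z solves the equation, so the
   semigroup property is derived from uniqueness of forward solutions of a
   locally Lipschitz equation (local Gronwall argument plus real induction). *)

Lemma Rplus_associative : associative Rplus.
Proof. by move=> *; ring. Qed.

HB.instance Definition _ :=
  Monoid.isComLaw.Build R 0 Rplus Rplus_associative Rplus_comm Rplus_0_l.

Section EuclideanNorm.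
Context {n : nat}.
Implicit Types (u v : vec n) (F G : 'I_n -> R).

Lemma sum_le F G : (forall i, F i <= G i) ->
  \big[Rplus/0]_(i < n) F i <= \big[Rplus/0]_(i < n) G i.
Proof.
by move=> H; apply: (big_ind2 (fun a b => a <= b)) => [|*|i _]; [lra|lra|exact: H].
Qed.

Lemma sum_ge0 F : (forall i, 0 <= F i) -> 0 <= \big[Rplus/0]_(i < n) F i.
Proof.
by move=> H; apply: (big_ind (fun a => 0 <= a)) => [|*|i _]; [lra|lra|exact: H].
Qed.

Lemma sum_scal c F :
  \big[Rplus/0]_(i < n) (c * F i) = c * \big[Rplus/0]_(i < n) F i.
Proof.
by apply: (big_ind2 (fun a b => a = c * b)) => [|x1 x2 y1 y2 -> ->|]; try ring.
Qed.

Definition ssq v : R := \big[Rplus/0]_(i < n) (v i * v i).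
Definition vdot u v : R := \big[Rplus/0]_(i < n) (u i * v i).

Lemma ssq_ge0 v : 0 <= ssq v.
Proof. by apply: sum_ge0 => i; nra. Qed.

Lemma vnorm_ge0 v : 0 <= vnorm v.
Proof. exact: sqrt_pos. Qed.

Lemma vnorm_sq v : vnorm v * vnorm v = ssq v.
Proof. exact/sqrt_sqrt/ssq_ge0. Qed.

Lemma ssq_eq0 v : ssq v = 0 -> forall i, v i = 0.
Proof.
move=> H i.
have rest : 0 <= \big[Rplus/0]_(j < n | j != i) (v j * v j).
  by apply: (big_ind (fun a => 0 <= a)) => [|*|*]; nra.
have : ssq v = v i * v i + \big[Rplus/0]_(j < n | j != i) (v j * v j).
  by rewrite /ssq (bigD1 i).
nra.
Qed.

Lemma vdot_zero_l u v : vnorm u = 0 -> vdot u v = 0.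
Proof.
move=> H; have u0 := ssq_eq0 u ltac:(rewrite -vnorm_sq H; ring).
by rewrite /vdot big1 // => i _; rewrite u0; ring.
Qed.

Lemma vdot_young u v k : 0 < k -> 2 * vdot u v <= k * ssq u + ssq v / k.
Proof.
move=> kp.
have -> : k * ssq u + ssq v / k =
    \big[Rplus/0]_(i < n) (k * (u i * u i) + / k * (v i * v i)).
  by rewrite big_split /= !sum_scal /ssq; field; lra.
rewrite /vdot -sum_scal; apply: sum_le => i.
have sq : 0 <= (k * u i - v i) * (k * u i - v i) / k.
  rewrite /Rdiv; apply: Rmult_le_pos; first exact: Rle_0_sqr.
  by apply: Rlt_le; apply: Rinv_0_lt_compat.
have -> : k * (u i * u i) + / k * (v i * v i) =
    2 * (u i * v i) + (k * u i - v i) * (k * u i - v i) / k by field; lra.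
lra.
Qed.

Lemma vdotC u v : vdot u v = vdot v u.
Proof. by apply: eq_bigr => i _; ring. Qed.

(* Cauchy-Schwarz: Young's inequality with the optimal weight |v| / |u|. *)
Lemma cauchy_schwarz u v : vdot u v <= vnorm u * vnorm v.
Proof.
have nu := vnorm_ge0 u; have nv := vnorm_ge0 v.
have [u0 | u0] := Req_dec (vnorm u) 0; first by rewrite vdot_zero_l // u0; lra.
have [v0 | v0] := Req_dec (vnorm v) 0.
  by rewrite vdotC vdot_zero_l // v0; lra.
have := vdot_young u v (vnorm v / vnorm u) ltac:(apply: Rdiv_lt_0_compat; lra).
rewrite -!vnorm_sq.
have -> : vnorm v / vnorm u * (vnorm u * vnorm u) = vnorm u * vnorm v by field.
have -> : vnorm v * vnorm v / (vnorm v / vnorm u) = vnorm u * vnorm v by field.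
lra.
Qed.

Lemma vnorm_add u v : vnorm (vadd u v) <= vnorm u + vnorm v.
Proof.
have nu := vnorm_ge0 u; have nv := vnorm_ge0 v.
rewrite {1}/vnorm -(sqrt_square (vnorm u + vnorm v)); last lra.
apply: sqrt_le_1_alt.
have -> : \big[Rplus/0]_(i < n) (vadd u v i * vadd u v i) =
    ssq u + 2 * vdot u v + ssq v.
  by rewrite /ssq /vdot -sum_scal -!big_split /=; apply: eq_bigr => i _;
     rewrite /vadd; ring.
rewrite -!vnorm_sq; have := cauchy_schwarz u v; nra.
Qed.

Lemma vnorm_scale c v : vnorm (vscale c v) = Rabs c * vnorm v.
Proof.
rewrite /vnorm.
have -> : \big[Rplus/0]_(i < n) (vscale c v i * vscale c v i) =
    (c * c) * \big[Rplus/0]_(i < n) (v i * v i).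
  by rewrite -sum_scal; apply: eq_bigr => i _; rewrite /vscale; ring.
by rewrite sqrt_mult ?(sqrt_Rsqr_abs c) //; [nra | exact: ssq_ge0].
Qed.

Lemma vnorm_sub_le u v : vnorm (vsub u v) <= vnorm u + vnorm v.
Proof.
have -> : vsub u v = vadd u (vscale (-1) v).
  by apply: functional_extensionality => i; rewrite /vsub /vadd /vscale; ring.
by apply: Rle_trans (vnorm_add _ _) _; rewrite vnorm_scale Rabs_Ropp Rabs_R1; lra.
Qed.

Lemma ssq_sub_self v : ssq (vsub v v) = 0.
Proof. by rewrite /ssq big1 // => i _; rewrite /vsub; ring. Qed.

Lemma vnorm_sub_self v : vnorm (vsub v v) = 0.
Proof. by rewrite /vnorm -/(ssq _) ssq_sub_self sqrt_0. Qed.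

Lemma vdot_lipschitz p q K :
  0 <= K -> vnorm q <= K * vnorm p -> vdot p q <= K * ssq p.
Proof.
move=> K0 Hq; have := cauchy_schwarz p q; have := vnorm_ge0 p.
rewrite -vnorm_sq; nra.
Qed.

End EuclideanNorm.

Definition right_cont (g : R -> R) (m : R) : Prop :=
  limit1_in g (fun s => m <= s) (g m) m.

Lemma sum_fun_ind n (P : (R -> R) -> R -> Prop) (F : 'I_n -> R -> R)
    (G : 'I_n -> R) :
  P (fun _ => 0) 0 ->
  (forall g h a b, P g a -> P h b -> P (fun t => g t + h t) (a + b)) ->
  (forall i, P (F i) (G i)) ->
  P (fun t => \big[Rplus/0]_(i < n) F i t) (\big[Rplus/0]_(i < n) G i).
Proof.
move=> P0 PD PF; elim: (index_enum _) => [|j r IH].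
  have -> : (fun t => \big[Rplus/0]_(i <- [::]) F i t) = (fun _ => 0).
    by apply: functional_extensionality => t; rewrite big_nil.
  by rewrite big_nil.
have -> : (fun t => \big[Rplus/0]_(i <- j :: r) F i t) =
    (fun t => F j t + \big[Rplus/0]_(i <- r) F i t).
  by apply: functional_extensionality => t; rewrite big_cons.
by rewrite big_cons; apply: PD.
Qed.

Lemma limit1_in_const (c x0 : R) (D : R -> Prop) : limit1_in (fun _ => c) D c x0.
Proof.
move=> e ep; exists 1; split; first lra.
by move=> x _; rewrite /dist /= /R_dist Rminus_diag Rabs_R0.
Qed.

Lemma right_cont_sum n (F : 'I_n -> R -> R) m :
  (forall i, right_cont (F i) m) ->
  right_cont (fun t => \big[Rplus/0]_(i < n) F i t) m.
Proof.
move=> H; rewrite /right_cont /=.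
apply: (sum_fun_ind _ (fun g a => limit1_in g (fun s => m <= s) a m) F
         (fun i => F i m)) => //.
- exact: limit1_in_const.
- by move=> g h a b; apply: limit_plus.
Qed.

Lemma derivable_pt_lim_sum n (F : 'I_n -> R -> R) (G : 'I_n -> R) x :
  (forall i, derivable_pt_lim (F i) x (G i)) ->
  derivable_pt_lim (fun t => \big[Rplus/0]_(i < n) F i t) x
                   (\big[Rplus/0]_(i < n) G i).
Proof.
move=> H; apply: (sum_fun_ind _ (fun g a => derivable_pt_lim g x a)) => //.
- exact: derivable_pt_lim_const.
- by move=> g h a b; apply: derivable_pt_lim_plus.
Qed.

Lemma right_cont_of_derivable g m l : derivable_pt_lim g m l -> right_cont g m.
Proof.
move=> D eps ep.
have [d [dp Hd]] := derivable_continuous_pt g m (exist _ l D) eps ep.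
exists d; split => // x [mx xm].
have [-> | ne] := Req_dec x m.
  by rewrite /dist /= /R_dist Rminus_diag Rabs_R0.
by apply: Hd; split => //; split => //; apply: not_eq_sym.
Qed.

Lemma right_cont_shift g tau t :
  right_cont g (tau + t) -> right_cont (fun s => g (tau + s)) t.
Proof.
move=> H eps ep; have [a [ap Ha]] := H eps ep.
exists a; split => // s [ts st]; apply: Ha; split; first lra.
by move: st; rewrite /dist /= /R_dist (_ : tau + s - (tau + t) = s - t) //; ring.
Qed.

Lemma derivable_pt_lim_shift g tau t l :
  derivable_pt_lim g (tau + t) l -> derivable_pt_lim (fun s => g (tau + s)) t l.
Proof.
move=> H eps ep; have [d Hd] := H eps ep.
by exists d => h hn hd; rewrite -Rplus_assoc; apply: Hd.
Qed.

Lemma derivable_pt_lim_exp_lin c s :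
  derivable_pt_lim (fun t => exp (c * t)) s (exp (c * s) * c).
Proof.
have Dlin : derivable_pt_lim (fun t => c * t) s c.
  have := derivable_pt_lim_scal id c s 1 (derivable_pt_lim_id s).
  by rewrite Rmult_1_r.
exact: (derivable_pt_lim_comp (fun t => c * t) exp s c (exp (c * s)) Dlin
          (derivable_pt_lim_exp _)).
Qed.

Lemma nonpos_right_of_zero (v dv : R -> R) m eps :
  right_cont v m -> v m = 0 ->
  (forall s, m < s <= m + eps -> derivable_pt_lim v s (dv s) /\ dv s <= 0) ->
  forall s, m < s <= m + eps -> v s <= 0.
Proof.
move=> Rv vm Dv s [ms se]; apply: Rnot_lt_le => vs.
have [al [alp Hal]] := Rv (v s) vs.
(* a point s0 in (m, s) so close to m that |v s0| < v s *)
have [s0 [[ms0 s0s] s0al]] : exists s0, m < s0 < s /\ s0 - m < al.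
  exists (m + Rmin al (s - m) / 2).
  by have := Rmin_l al (s - m); have := Rmin_r al (s - m);
     have := Rmin_pos al (s - m) alp ltac:(lra); lra.
have vs0 : Rabs (v s0) < v s.
  have := Hal s0; rewrite /dist /= /R_dist vm Rminus_0_r; apply.
  by split; [lra | rewrite Rabs_right; lra].
(* but v decreases on [s0, s] by the mean value theorem *)
have [c [mvt cI]] := MVT_cor2 v dv s0 s s0s (fun c cI => proj1 (Dv c ltac:(lra))).
have := proj2 (Dv c ltac:(lra)); have := Rle_abs (v s0).
nra.
Qed.

Lemma zero_at_left_limit (g : R -> R) m :
  0 < m -> continuity_pt g m -> (forall s, 0 <= s < m -> g s = 0) -> g m = 0.
Proof.
move=> mp gc g0; apply: NNPP => ne.
have gm : 0 < Rabs (g m) by apply: Rabs_pos_lt.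
have [d [dp Hd]] := gc _ gm.
have s0 := Rmax_l 0 (m - d / 2); have s1 := Rmax_r 0 (m - d / 2).
have sm : Rmax 0 (m - d / 2) < m by apply: Rmax_lub_lt; lra.
set s := Rmax 0 (m - d / 2) in s0 s1 sm.
have gs : g s = 0 by apply: g0; lra.
apply: (Rlt_irrefl (Rabs (g m))).
have := Hd s; rewrite /dist /= /R_dist gs Rminus_0_l Rabs_Ropp.
apply; split; first by split => //; apply: Rgt_not_eq.
by rewrite Rabs_left; lra.
Qed.

Lemma real_induction (P : R -> Prop) :
  (forall m, 0 <= m -> (forall s, 0 <= s < m -> P s) -> P m) ->
  (forall m, 0 <= m -> (forall s, 0 <= s <= m -> P s) ->
     exists eps, 0 < eps /\ forall s, m <= s <= m + eps -> P s) ->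
  forall T, 0 <= T -> P T.
Proof.
move=> closed open T T0; apply: NNPP => nPT.
set E := fun t => 0 <= t /\ forall s, 0 <= s <= t -> P s.
have Eb : bound E.
  exists T => t [t0 Pt]; apply: Rnot_lt_le => lt; apply: nPT; apply: Pt; lra.
have E0 : E 0.
  split; first lra.
  by move=> s s0; rewrite (_ : s = 0); [apply: closed => *; lra | lra].
have [m [ub lub]] := completeness E Eb (ex_intro _ 0 E0).
have m0 : 0 <= m by apply: ub.
have below : forall s, 0 <= s < m -> P s.
  move=> s [s0 sm]; apply: NNPP => nPs.
  suff : m <= s by lra.
  apply: lub => t [t0 Pt]; apply: Rnot_lt_le => st; apply: nPs; apply: Pt; lra.
have upto : forall s, 0 <= s <= m -> P s.
  move=> s [s0 sm]; have [-> | ne] := Req_dec s m; first exact: closed.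
  apply: below; lra.
have [eps [epsp Peps]] := open m m0 upto.
suff : m + eps <= m by lra.
apply: ub; split; first lra.
move=> s [s0 sme]; have [sm | ms] := Rle_lt_dec s m; [exact: upto | apply: Peps]; lra.
Qed.

Section ForwardSolutions.
Context {n : nat} (f : vec n -> vec n).

Definition forward_solution (y : R -> vec n) : Prop :=
  (forall i m, 0 <= m -> right_cont (fun s => y s i) m) /\
  (forall i t, 0 < t -> derivable_pt_lim (fun s => y s i) t (f (y t) i)).

Lemma right_cont_sqdist (y1 y2 : R -> vec n) m :
  (forall i, right_cont (fun s => y1 s i) m) ->
  (forall i, right_cont (fun s => y2 s i) m) ->
  right_cont (fun s => ssq (vsub (y1 s) (y2 s))) m.
Proof.
move=> R1 R2; rewrite /ssq; apply: right_cont_sum => i.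
rewrite /right_cont /vsub /=; apply: limit_mul; apply: limit_minus;
  by [exact: R1 | exact: R2 | exact: R1 | exact: R2].
Qed.

Lemma right_cont_ball (y : R -> vec n) m :
  (forall i, right_cont (fun s => y s i) m) ->
  forall d, 0 < d -> exists a, 0 < a /\
    forall s, m <= s < m + a -> vnorm (vsub (y s) (y m)) < d.
Proof.
move=> Ry d dp.
have Rc : forall i, right_cont (fun _ => y m i) m by move=> i; exact: limit1_in_const.
have [a [ap Ha]] := right_cont_sqdist y (fun _ => y m) m Ry Rc (d * d) ltac:(nra).
exists a; split => // s [ms sa].
have := Ha s; rewrite /dist /= /R_dist ssq_sub_self Rminus_0_r -vnorm_sq => near.
have {}near : vnorm (vsub (y s) (y m)) * vnorm (vsub (y s) (y m)) < d * d.
  by apply: Rle_lt_trans (Rle_abs _) _; apply: near; rewrite Rabs_right; lra.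
have := vnorm_ge0 (vsub (y s) (y m)); nra.
Qed.

Lemma sqdist_deriv (y1 y2 : R -> vec n) s :
  forward_solution y1 -> forward_solution y2 -> 0 < s ->
  derivable_pt_lim (fun t => ssq (vsub (y1 t) (y2 t))) s
    (2 * vdot (vsub (y1 s) (y2 s)) (vsub (f (y1 s)) (f (y2 s)))).
Proof.
move=> [_ D1] [_ D2] sp.
have -> : 2 * vdot (vsub (y1 s) (y2 s)) (vsub (f (y1 s)) (f (y2 s))) =
    \big[Rplus/0]_(i < n) ((f (y1 s) i - f (y2 s) i) * (y1 s i - y2 s i) +
                          (y1 s i - y2 s i) * (f (y1 s) i - f (y2 s) i)).
  by rewrite /vdot -sum_scal; apply: eq_bigr => i _; rewrite /vsub; ring.
apply: derivable_pt_lim_sum => i.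
apply: (derivable_pt_lim_mult (fun t => y1 t i - y2 t i) (fun t => y1 t i - y2 t i));
  apply: (derivable_pt_lim_minus (fun t => y1 t i) (fun t => y2 t i));
  by [apply: D1 | apply: D2 | apply: D1 | apply: D2].
Qed.

Hypothesis f_lip : locally_lipschitz f.

(* Near y m the function f is K-Lipschitz, so the
   squared distance w satisfies w' <= 2 K w and w(s) exp(-2 K s) decreases. *)
Lemma local_uniqueness (y1 y2 : R -> vec n) m :
  forward_solution y1 -> forward_solution y2 -> 0 <= m -> y1 m = y2 m ->
  exists eps, 0 < eps /\ forall s, m <= s <= m + eps -> y1 s = y2 s.
Proof.
move=> S1 S2 m0 e0.
have [dl [K [dlp [K0 HL]]]] := f_lip (y1 m).
have [a1 [a1p near1]] := right_cont_ball y1 m (fun i => proj1 S1 i m m0) dl dlp.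
have [a2 [a2p near2]] := right_cont_ball y2 m (fun i => proj1 S2 i m m0) dl dlp.
rewrite -e0 in near2.
have [eps [epsp [ea1 ea2]]] : exists eps, 0 < eps /\ eps < a1 /\ eps < a2.
  exists (Rmin a1 a2 / 2).
  by have := Rmin_l a1 a2; have := Rmin_r a1 a2; have := Rmin_pos a1 a2 a1p a2p; lra.
exists eps; split => //.
set w := fun s => ssq (vsub (y1 s) (y2 s)).
set dw := fun s => 2 * vdot (vsub (y1 s) (y2 s)) (vsub (f (y1 s)) (f (y2 s))).
set c := - (2 * K).
have w_growth : forall s, m < s <= m + eps -> dw s <= 2 * K * w s.
  move=> s ms; rewrite /dw /w.
  suff : vdot (vsub (y1 s) (y2 s)) (vsub (f (y1 s)) (f (y2 s))) <=
         K * ssq (vsub (y1 s) (y2 s)) by lra.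
  by apply: vdot_lipschitz => //; apply: HL; [apply: near1 | apply: near2]; lra.
have v_nonpos : forall s, m < s <= m + eps -> w s * exp (c * s) <= 0.
  apply: (nonpos_right_of_zero _ (fun s => dw s * exp (c * s) + w s * (exp (c * s) * c))).
  - rewrite /right_cont /=; apply: limit_mul.
      exact: (right_cont_sqdist y1 y2 m (fun i => proj1 S1 i m m0)
                (fun i => proj1 S2 i m m0)).
    exact: (right_cont_of_derivable _ _ _ (derivable_pt_lim_exp_lin c m)).
  - by rewrite /w e0 ssq_sub_self Rmult_0_l.
  - move=> s ms; split.
      apply: (derivable_pt_lim_mult w (fun t => exp (c * t))).
        by apply: sqdist_deriv => //; lra.
      exact: derivable_pt_lim_exp_lin.
    have := w_growth s ms; have := exp_pos (c * s); rewrite /c; nra.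
move=> s [ms se]; have [-> // | ne] := Req_dec s m.
have w0 : w s = 0.
  have := v_nonpos s ltac:(lra); have := exp_pos (c * s).
  have := ssq_ge0 (vsub (y1 s) (y2 s)); rewrite /w; nra.
apply: functional_extensionality => i.
by have := ssq_eq0 _ w0 i; rewrite /vsub; lra.
Qed.

Lemma forward_solution_unique (y1 y2 : R -> vec n) :
  forward_solution y1 -> forward_solution y2 -> y1 0 = y2 0 ->
  forall T, 0 <= T -> y1 T = y2 T.
Proof.
move=> S1 S2 e0; apply: real_induction => [m m0 below | m m0 upto].
  have [-> // | mne] := Req_dec m 0.
  apply: functional_extensionality => i.
  suff : y1 m i - y2 m i = 0 by lra.
  apply: (zero_at_left_limit (fun s => y1 s i - y2 s i)); first lra.
    apply: derivable_continuous_pt; exists (f (y1 m) i - f (y2 m) i).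
    by apply: derivable_pt_lim_minus; [apply: (proj2 S1) | apply: (proj2 S2)]; lra.
  by move=> s s_lt; rewrite /= below //; ring.
by apply: local_uniqueness => //; apply: upto; lra.
Qed.

End ForwardSolutions.

Lemma forward_solution_shift {n} (f : vec n -> vec n) (y : R -> vec n) tau :
  0 <= tau -> forward_solution f y -> forward_solution f (fun s => y (tau + s)).
Proof.
move=> tau0 [Ry Dy]; split => [i m m0 | i t tp].
  by apply: (right_cont_shift (fun s => y s i)); apply: Ry; lra.
by apply: (derivable_pt_lim_shift (fun s => y s i)); apply: Dy; lra.
Qed.

Lemma flow_forward_solution {n} (f : vec n -> vec n) z x :
  is_flow f z -> forward_solution f (fun s => z s x).
Proof.
move=> flow; have [z0 [Rz0 Dz]] := flow x; split => // i m m0.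
have [-> | ne] := Req_dec m 0; last by apply: right_cont_of_derivable; apply: Dz; lra.
move=> eps ep; have [d [dp Hd]] := Rz0 i eps ep.
exists d; split => // s [s0 sd]; rewrite /dist /= /R_dist z0.
by apply: Hd; move: sd; rewrite /dist /= /R_dist Rminus_0_r Rabs_right; lra.
Qed.

Lemma flow_semigroup {n} (f : vec n -> vec n) z :
  locally_lipschitz f -> is_flow f z ->
  forall x tau h, 0 <= tau -> 0 <= h -> z (tau + h) x = z h (z tau x).
Proof.
move=> f_lip flow x tau h tau0 h0.
have := forward_solution_unique f f_lip (fun s => z (tau + s) x) (fun s => z s (z tau x)).
apply => //.
- exact: (forward_solution_shift f _ tau tau0 (flow_forward_solution f z x flow)).
- exact: flow_forward_solution.
- by rewrite Rplus_0_r; have [-> _] := flow (z tau x).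
Qed.

Lemma exp_le_mono x y : x <= y -> exp x <= exp y.
Proof. by case=> [lt | ->]; [left; exact: exp_increasing | right]. Qed.

Lemma exp_le_1 x : x <= 0 -> exp x <= 1.
Proof. by rewrite -exp_0; apply: exp_le_mono. Qed.

Lemma ln_le_mono x y : 0 < x -> x <= y -> ln x <= ln y.
Proof. by move=> x0; case=> [lt | ->]; [left; exact: ln_increasing | right]. Qed.

Section HybridTrajectory.
Context {n : nat} (phi : vec n -> R) (F : R -> vec n -> vec n) (u : R -> R)
        (x0 : vec n).
Local Notation tau := (hyb_tau phi F u x0).
Local Notation xs := (hyb_x phi F u x0).
Local Notation hs := (hyb_h phi F u x0).

Lemma hyb_tau_S j : tau (S j) = tau j + hs j.
Proof. by rewrite /hyb_h /hyb_tau /hyb_x /=; case: (hyb_state phi F u x0 j). Qed.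

Lemma hyb_x_S j : xs (S j) = vadd (xs j) (vscale (hs j) (F (hs j) (xs j))).
Proof. by rewrite /hyb_h /hyb_tau /hyb_x /=; case: (hyb_state phi F u x0 j). Qed.

Lemma hyb_traj_start j : hyb_traj phi F u x0 j (tau j) = xs j.
Proof.
by apply: functional_extensionality => i; rewrite /hyb_traj /vadd /vscale; ring.
Qed.

Lemma hyb_traj_end j : hyb_traj phi F u x0 j (tau (S j)) = xs (S j).
Proof.
rewrite hyb_tau_S hyb_x_S; apply: functional_extensionality => i.
by rewrite /hyb_traj /vadd /vscale; ring.
Qed.

Hypothesis phi_pos : forall x, 0 < phi x.

Lemma hyb_h_pos j : 0 < hs j.
Proof. by apply: Rmult_lt_0_compat; [exact: phi_pos | exact: exp_pos]. Qed.

Lemma hyb_tau_le_S j : tau j <= tau (S j).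
Proof. by rewrite hyb_tau_S; have := hyb_h_pos j; lra. Qed.

Lemma hyb_tau_ge0 j : 0 <= tau j.
Proof.
by elim: j => [|j IH]; [rewrite /hyb_tau /=; lra | have := hyb_tau_le_S j; lra].
Qed.

Lemma hyb_h_le_phi j : (forall t, 0 <= t -> 0 <= u t) -> hs j <= phi (xs j).
Proof.
move=> u0; have := phi_pos (xs j); have := exp_le_1 (- u (tau j)).
have := u0 _ (hyb_tau_ge0 j); have := exp_pos (- u (tau j)).
rewrite /hyb_h; nra.
Qed.

End HybridTrajectory.

Section MaxDefect.
Context {n : nat} (z : R -> vec n -> vec n) (phi : vec n -> R)
        (F : R -> vec n -> vec n) (u : R -> R) (x0 : vec n).
Local Notation D := (Dmax z phi F u x0).

Lemma Dmax_ge_defect j :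
  vnorm (dtilde z F (hyb_h phi F u x0 j) (z (hyb_tau phi F u x0 j) x0)) <= D j.
Proof. by case: j => [|j] /=; [lra | exact: Rmax_r]. Qed.

Lemma Dmax_le_S j : D j <= D (S j).
Proof. exact: Rmax_l. Qed.

Lemma Dmax_ge0 j : 0 <= D j.
Proof. exact: Rle_trans (vnorm_ge0 _) (Dmax_ge_defect j). Qed.

End MaxDefect.

(* One step of the discrete Gronwall inequality: the bound Q (exp (L t) - 1)
   is propagated by the recursion e' <= (1 + h L) e + h L Q, because
   1 + h L <= exp (h L). *)
Lemma gronwall_step L Q t h e e' :
  0 < L -> 0 <= Q -> 0 <= t -> 0 <= h ->
  e <= Q * (exp (L * t) - 1) -> e' <= (1 + h * L) * e + h * (L * Q) ->
  e' <= Q * (exp (L * (t + h)) - 1).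
Proof.
move=> L0 Q0 t0 h0 He He'.
rewrite Rmult_plus_distr_l exp_plus.
have E1 : 1 <= exp (L * t) by rewrite -exp_0; apply: exp_le_mono; nra.
have G1 := exp_ineq1_le (L * h).
have := Rmult_le_compat_l (1 + h * L) _ _ ltac:(nra) He.
have : 0 <= Q * exp (L * t) * (exp (L * h) - (1 + L * h)).
  by apply: Rmult_le_pos; [apply: Rmult_le_pos => //; lra | lra].
nra.
Qed.

Lemma discrete_gronwall L (tau h e D : nat -> R) :
  0 < L -> tau O = 0 -> e O = 0 ->
  (forall j, tau (S j) = tau j + h j) -> (forall j, 0 <= h j) ->
  (forall j, 0 <= D j) -> (forall j, D j <= D (S j)) ->
  (forall j, e (S j) <= (1 + h j * L) * e j + h j * D j) ->
  forall j, e (S j) <= D j / L * (exp (L * tau (S j)) - 1).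
Proof.
move=> L0 tau0 e0 tauS h0 D0 Dmono rec.
have tau_ge0 : forall j, 0 <= tau j.
  by elim=> [|j IH]; [lra | rewrite tauS; have := h0 j; lra].
have step : forall j, e j <= D j / L * (exp (L * tau j) - 1) ->
    e (S j) <= D j / L * (exp (L * tau (S j)) - 1).
  move=> j ej; rewrite tauS; apply: (gronwall_step _ _ _ _ (e j)) => //.
  - by apply: Rmult_le_pos => //; apply/Rlt_le/Rinv_0_lt_compat.
  - by rewrite (_ : L * (D j / L) = D j) //; field; lra.
have bound : forall j, e j <= D j / L * (exp (L * tau j) - 1).
  elim=> [|j IH]; first by rewrite e0 tau0 Rmult_0_r exp_0; lra.
  apply: Rle_trans (step j IH) _; apply: Rmult_le_compat_r.
    have := exp_le_mono 0 (L * tau (S j)); rewrite exp_0.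
    by have := tau_ge0 (S j); nra.
  by apply: Rmult_le_compat_r; [apply/Rlt_le/Rinv_0_lt_compat | apply: Dmono].
by move=> j; apply: step.
Qed.

Lemma interpolate_exp_bounds (e A B L mu t : R) :
  0 <= e -> 0 <= A -> 0 <= B -> 0 < L -> 0 < mu ->
  e <= A * (exp (L * t) - 1) -> e <= B * exp (- mu * t) ->
  e <= rpow A (mu / (mu + L)) * rpow B (L / (mu + L)).
Proof.
move=> e0 A0 B0 L0 mu0 grow decay.
have grow' : e <= A * exp (L * t) by have := exp_pos (L * t); nra.
(* if A = 0 or B = 0 then e = 0 *)
rewrite /rpow; case: (Rlt_dec 0 A) => Ap /=; last first.
  by rewrite Rmult_0_l; have := Rnot_lt_le _ _ Ap; have := exp_pos (L * t); nra.
case: (Rlt_dec 0 B) => Bp /=; last first.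
  by rewrite Rmult_0_r; have := Rnot_lt_le _ _ Bp; have := exp_pos (- mu * t); nra.
(* otherwise take logarithms and form the convex combination of the bounds *)
rewrite /Rpower -exp_plus.
case: e0 => [ep | <-]; last by left; exact: exp_pos.
rewrite -(exp_ln e ep); apply: exp_le_mono.
have lnA : ln e <= ln A + L * t.
  rewrite -(ln_exp (L * t)) -ln_mult //; last exact: exp_pos.
  exact: ln_le_mono.
have lnB : ln e <= ln B + - mu * t.
  rewrite -(ln_exp (- mu * t)) -ln_mult //; last exact: exp_pos.
  exact: ln_le_mono.
set th := mu / (mu + L); set th' := L / (mu + L).
have th0 : 0 <= th by apply/Rlt_le/Rdiv_lt_0_compat; lra.
have th0' : 0 <= th' by apply/Rlt_le/Rdiv_lt_0_compat; lra.
have sum1 : th * ln e + th' * ln e = ln e by rewrite /th /th'; field; lra.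
have balance : th * L * t = th' * mu * t by rewrite /th /th'; field; lra.
have := Rmult_le_compat_l _ _ _ th0 lnA; have := Rmult_le_compat_l _ _ _ th0' lnB.
nra.
Qed.

Lemma one_step_error {n} (z : R -> vec n -> vec n) (F : R -> vec n -> vec n)
    (zz x : vec n) h :
  0 < h ->
  vsub (z h zz) (vadd x (vscale h (F h x))) =
  vadd (vadd (vsub zz x) (vscale h (vsub (F h zz) (F h x))))
       (vscale h (dtilde z F h zz)).
Proof.
move=> hp; apply: functional_extensionality => k.
by rewrite /vsub /vadd /vscale /dtilde /vsub /vscale; field; lra.
Qed.

Section HybridError.
Context {n : nat} (f : vec n -> vec n) (z : R -> vec n -> vec n)
  (phi : vec n -> R) (F : R -> vec n -> vec n) (u : R -> R) (x0 : vec n)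
  (a : R -> R) (L sigma lambda : R).
Local Notation tau := (hyb_tau phi F u x0).
Local Notation xs := (hyb_x phi F u x0).
Local Notation hs := (hyb_h phi F u x0).
Local Notation defect j := (vnorm (dtilde z F (hs j) (z (tau j) x0))).
Local Notation err j := (vnorm (vsub (z (tau j) x0) (xs j))).

Hypotheses (f_lip : locally_lipschitz f) (z_flow : is_flow f z)
  (phi_pos : forall x, 0 < phi x) (u_nonneg : forall t, 0 <= t -> 0 <= u t)
  (sigma_pos : 0 < sigma) (lambda_range : 0 < lambda < 1) (L_pos : 0 < L).
Hypothesis z_decay :
  forall t, 0 <= t -> vnorm (z t x0) <= exp (- sigma * t) * a (vnorm x0).
Hypothesis x_decay : forall i t, tau i <= t <= tau (S i) ->
  vnorm (hyb_traj phi F u x0 i t) <= exp (- lambda * sigma * t) * a (vnorm x0).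
Hypothesis F_lip :
  forall zz x, vnorm x <= a (vnorm x0) -> vnorm zz <= a (vnorm x0) ->
  forall h, 0 <= h <= phi x ->
    vnorm (vsub (F h zz) (F h x)) <= L * vnorm (vsub zz x).

(* The radius a(|x0|) is nonnegative, as it bounds |z(0, x0)|. *)
Lemma a_x0_ge0 : 0 <= a (vnorm x0).
Proof.
have := z_decay 0 (Rle_refl 0); rewrite Rmult_0_r exp_0 Rmult_1_l.
exact: Rle_trans (vnorm_ge0 _).
Qed.

(* Both trajectories stay in the ball of radius a(|x0|) where F is
   L-Lipschitz. *)
Lemma flow_in_ball j : vnorm (z (tau j) x0) <= a (vnorm x0).
Proof.
have tj := hyb_tau_ge0 phi F u x0 phi_pos j.
apply: Rle_trans (z_decay _ tj) _; have := a_x0_ge0.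
by have := exp_le_1 (- sigma * tau j) ltac:(nra); nra.
Qed.

Lemma hybrid_in_ball j : vnorm (xs j) <= a (vnorm x0).
Proof.
have tj := hyb_tau_ge0 phi F u x0 phi_pos j.
have := x_decay j (tau j) (conj (Rle_refl _) (hyb_tau_le_S phi F u x0 phi_pos j)).
rewrite hyb_traj_start => H; apply: Rle_trans H _; have := a_x0_ge0.
have ls : 0 < lambda * sigma by nra.
by have := exp_le_1 (- lambda * sigma * tau j) ltac:(nra); nra.
Qed.

Lemma error_start : err O = 0.
Proof.
by rewrite /hyb_tau /hyb_x /=; have [-> _] := z_flow x0; apply: vnorm_sub_self.
Qed.

Lemma error_step j : err (S j) <= (1 + hs j * L) * err j + hs j * defect j.
Proof.
have hp := hyb_h_pos phi F u x0 phi_pos j.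
have hphi := hyb_h_le_phi phi F u x0 phi_pos j u_nonneg.
have lip := F_lip _ _ (hybrid_in_ball j) (flow_in_ball j) _ (conj (Rlt_le _ _ hp) hphi).
(* z(tau_{j+1}) = z(h_j, z(tau_j)) by the semigroup property *)
rewrite hyb_tau_S hyb_x_S (flow_semigroup f z f_lip z_flow x0 _ _
  (hyb_tau_ge0 phi F u x0 phi_pos j) (Rlt_le _ _ hp)) one_step_error //.
apply: Rle_trans (vnorm_add _ _) _.
apply: Rle_trans (Rplus_le_compat_r _ _ _ (vnorm_add _ _)) _.
by rewrite !vnorm_scale Rabs_right; nra.
Qed.

Lemma error_exp_bound i :
  err (S i) <= Dmax z phi F u x0 i / L * (exp (L * tau (S i)) - 1).
Proof.
apply: (discrete_gronwall L tau hs (fun j => err j) (Dmax z phi F u x0)) => //.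
- exact: error_start.
- exact: hyb_tau_S.
- by move=> j; apply/Rlt_le/hyb_h_pos.
- exact: Dmax_ge0.
- exact: Dmax_le_S.
- move=> j; apply: Rle_trans (error_step j) _; apply: Rplus_le_compat_l.
  by apply: Rmult_le_compat_l; [apply/Rlt_le/hyb_h_pos | apply: Dmax_ge_defect].
Qed.

(* Second estimate: both trajectories decay, at rate at least lambda sigma. *)
Lemma error_decay_bound i :
  err (S i) <= 2 * a (vnorm x0) * exp (- (lambda * sigma) * tau (S i)).
Proof.
have t0 := hyb_tau_ge0 phi F u x0 phi_pos (S i).
apply: Rle_trans (vnorm_sub_le _ _) _.
have := z_decay _ t0.
have := x_decay i _ (conj (hyb_tau_le_S phi F u x0 phi_pos i) (Rle_refl _)).
rewrite hyb_traj_end (_ : - lambda * sigma = - (lambda * sigma)); last ring.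
have : exp (- sigma * tau (S i)) <= exp (- (lambda * sigma) * tau (S i)).
  have : 0 <= sigma * tau (S i) by nra.
  by move=> st; apply: exp_le_mono; nra.
have := a_x0_ge0; have := exp_pos (- (lambda * sigma) * tau (S i)); nra.
Qed.

End HybridError.

Theorem mainTheorem10 (n : nat) (f : vec n -> vec n) (z : R -> vec n -> vec n)
  (r : R) (phi : vec n -> R) (F : R -> vec n -> vec n) (M : R -> R)
  (sigma lambda : R) (a : R -> R) (L : vec n -> R) :
  (* standing framework *)
  locally_lipschitz f -> f vzero = vzero -> is_flow f z ->
  0 < r -> cont_vec_R phi -> (forall x, 0 < phi x <= r) ->
  (forall h, 0 <= h <= r -> F h vzero = vzero) ->
  (forall x eps, 0 < eps -> exists delta, 0 < delta /\
      forall h, 0 < h < delta -> h <= r -> vnorm (vsub (F h x) (f x)) < eps) ->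
  cont_on_nonneg M -> (forall s t, 0 <= s <= t -> M s <= M t) ->
  (forall h x, 0 <= h <= r -> vnorm (F h x) <= vnorm x * M (vnorm x)) ->
  (* hypotheses of the theorem *)
  0 < sigma -> 0 < lambda < 1 -> K_infty a ->
  (forall t z0, 0 <= t -> vnorm (z t z0) <= exp (- sigma * t) * a (vnorm z0)) ->
  (forall x0 u, loc_bounded_nonneg u ->
     forall i t, hyb_tau phi F u x0 i <= t <= hyb_tau phi F u x0 (S i) ->
       vnorm (hyb_traj phi F u x0 i t)
         <= exp (- lambda * sigma * t) * a (vnorm x0)) ->
  cont_vec_R L -> (forall x, 0 < L x) ->
  (forall x0 zz x, vnorm x <= a (vnorm x0) -> vnorm zz <= a (vnorm x0) ->
     forall h, 0 <= h <= phi x ->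
       vnorm (vsub (F h zz) (F h x)) <= L x0 * vnorm (vsub zz x)) ->
  (* conclusion *)
  forall x0 u, loc_bounded_nonneg u ->
  forall i : nat,
    let tau1 := hyb_tau phi F u x0 (S i) in
    let e1 := vnorm (vsub (z tau1 x0) (hyb_x phi F u x0 (S i))) in
    let D := Dmax z phi F u x0 i in
    e1 <= D / L x0 * (exp (L x0 * tau1) - 1) /\
    e1 <= rpow (D / L x0) (lambda * sigma / (lambda * sigma + L x0))
          * rpow (2 * a (vnorm x0)) (L x0 / (lambda * sigma + L x0)).
Proof.
move=> f_lip _ z_flow _ _ phi_bd _ _ _ _ _ sigma_pos lambda_range _ z_decay
  x_decay _ L_pos F_lip x0 u u_bd i tau1 e1 D.
have [u_nonneg _] := u_bd.
have phi_pos : forall x, 0 < phi x by move=> x; case: (phi_bd x).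
have L0 := L_pos x0.
have growth : e1 <= D / L x0 * (exp (L x0 * tau1) - 1).
  exact: (error_exp_bound f z phi F u x0 a (L x0) sigma lambda f_lip z_flow
            phi_pos u_nonneg sigma_pos lambda_range L0 (z_decay^~ x0)
            (x_decay x0 u u_bd) (F_lip x0)).
have decay : e1 <= 2 * a (vnorm x0) * exp (- (lambda * sigma) * tau1).
  exact: (error_decay_bound z phi F u x0 a sigma lambda phi_pos sigma_pos
            lambda_range (z_decay^~ x0) (x_decay x0 u u_bd)).
split => //; apply: (interpolate_exp_bounds _ _ _ _ _ tau1) => //.
- exact: vnorm_ge0.
- by apply: Rmult_le_pos; [apply: Dmax_ge0 | apply/Rlt_le/Rinv_0_lt_compat].
- by have := a_x0_ge0 z x0 a sigma (z_decay^~ x0); lra.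
- nra.
Qed.
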